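(* There exists $\bar\eta>0$ such that for every $\eta_1\ge\bar\eta$, every solution $\phi$ of $\phi''+f(\xi,\phi,\phi')=0$ with $\phi(\eta_1)=1$ and $\phi'(\eta_1)\le0$ satisfies $\phi'(\eta_2)<-1$ for every $\eta_2>\eta_1$ (in the maximal existence interval of $\phi$) with $\phi(\eta_2)\in[0,1/2]$.
   Context: Fix $d>2$. Define $f(\eta,v,w)=\frac{d+1}{\eta}w-\frac\eta2 w+\frac1d\eta v w+v^2-v$ for $\eta>0$, $v,w\in\mathbb R$. For $(\eta_0,v_0,w_0)$ with $\eta_0>0$, $\phi(\xi;\eta_0,v_0,w_0)$ denotes the solution of $\phi''+f(\xi,\phi,\phi')=0$ (derivatives in $\xi$) with $\phi(\eta_0)=v_0$, $\phi'(\eta_0)=w_0$. *)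

From Stdlib Require Import Reals Lra.
From Coquelicot Require Import Coquelicot.
Open Scope R_scope.

Definition f (d eta v w : R) : R :=
  (d + 1) / eta * w - eta / 2 * w + / d * eta * v * w + v ^ 2 - v.

Definition solves_on (d a b : R) (phi dphi : R -> R) : Prop :=
  forall x, a < x < b ->
    is_derive phi x (dphi x) /\
    is_derive dphi x (- f d x (phi x) (dphi x)).

From Pilot Require Import Defs.
From Stdlib Require Import Reals Lra Psatz.
From Coquelicot Require Import Coquelicot.
Open Scope R_scope.

(* Let [G = phi' + 3 (1 - phi)].  If [phi'(eta2) >= -1] then [G(eta2) > 0], while
   [G(eta1) = phi'(eta1) <= 0]; let [t0] be the last zero of [G] before [eta2].
   If [phi(t0) >= 1], then [G >= 0] on [[t0, eta2]] reads [(1 - phi)' <= 3 (1 - phi)],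
   and Gronwall keeps [phi >= 1] up to [eta2], contradicting [phi(eta2) <= 1/2].
   If [phi(t0) < 1], the equation gives [G'(t0) < 0] once [t0 >= etabar], so [G]
   cannot be positive just after [t0]. *)

Lemma continuity_pt_of_is_derive (g : R -> R) (x l : R) :
  is_derive g x l -> continuity_pt g x.
Proof.
  intros Hg. apply derivable_continuous_pt.
  exists l. now apply is_derive_Reals.
Qed.

Lemma continuity_pt_pos_nbhd (g : R -> R) (x : R) :
  continuity_pt g x -> 0 < g x ->
  exists del, 0 < del /\ forall y, Rabs (y - x) < del -> 0 < g y.
Proof.
  intros Hc Hpos.
  destruct (Hc (g x) Hpos) as [del [Hdel Hnear]].
  exists del. split; [exact Hdel|]. intros y Hy.
  destruct (Req_dec y x) as [->|Hyx]; [exact Hpos|].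
  assert (Hgy : Rabs (g y - g x) < g x).
  { apply (Hnear y). split; [split; [exact I|auto]|exact Hy]. }
  apply Rabs_def2 in Hgy. lra.
Qed.

Lemma last_zero (g : R -> R) (a b : R) :
  a <= b -> (forall t, a <= t <= b -> continuity_pt g t) ->
  g a <= 0 -> 0 < g b ->
  exists c, a <= c < b /\ g c = 0 /\ forall t, c < t <= b -> 0 < g t.
Proof.
  intros Hab Hcont Ha Hb.
  set (E := fun t => a <= t <= b /\ g t <= 0).
  destruct (completeness E) as [c [Hub Hlub]].
  - exists b. intros t [Ht _]. lra.
  - exists a. split; [lra|exact Ha].
  - assert (Hac : a <= c) by (apply Hub; split; [lra|exact Ha]).
    assert (Hcb : c <= b) by (apply Hlub; intros t [Ht _]; lra).
    assert (Hright : forall t, c < t <= b -> 0 < g t).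
    { intros t Ht. destruct (Rlt_or_le 0 (g t)) as [Hgt|Hgt]; [exact Hgt|].
      assert (t <= c) by (apply Hub; split; [lra|exact Hgt]). lra. }
    assert (Hgc_le : g c <= 0).
    { destruct (Rle_or_lt (g c) 0) as [Hgc|Hgc]; [exact Hgc|exfalso].
      destruct (continuity_pt_pos_nbhd g c (Hcont c ltac:(lra)) Hgc)
        as [del [Hdel Hnear]].
      assert (c <= c - del / 2); [|lra].
      apply Hlub. intros t [Ht Hgt].
      destruct (Rle_or_lt t (c - del / 2)) as [Hle|Hlt]; [exact Hle|].
      assert (t <= c) by (apply Hub; split; [lra|exact Hgt]).
      assert (0 < g t) by (apply Hnear; apply Rabs_def1; lra). lra. }
    assert (Hcb' : c < b) by (destruct Hcb as [Hcb| ->]; [exact Hcb|lra]).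
    assert (Hgc_ge : 0 <= g c).
    { destruct (Rle_or_lt 0 (g c)) as [Hgc|Hgc]; [exact Hgc|exfalso].
      assert (Hcont' : continuity_pt (fun t => - g t) c)
        by (apply continuity_pt_opp; apply Hcont; lra).
      destruct (continuity_pt_pos_nbhd _ c Hcont' ltac:(lra)) as [del [Hdel Hnear]].
      set (t := Rmin (c + del / 2) b).
      assert (Ht : c < t <= b)
        by (unfold t; split; [apply Rmin_glb_lt; lra|apply Rmin_r]).
      assert (0 < - g t).
      { apply Hnear. apply Rabs_def1; unfold t in *;
          pose proof (Rmin_l (c + del / 2) b); lra. }
      pose proof (Hright t Ht). lra. }
    exists c. repeat split; [lra|lra|lra|exact Hright].
Qed.

Lemma is_derive_ge0_at_left_min (g : R -> R) (c b l : R) :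
  c < b -> is_derive g c l -> (forall t, c < t <= b -> g c <= g t) -> 0 <= l.
Proof.
  intros Hcb Hg Hmin. apply is_derive_Reals in Hg.
  destruct (Rle_or_lt 0 l) as [Hl|Hl]; [exact Hl|exfalso].
  destruct (Hg (- l / 2) ltac:(lra)) as [del Hdel].
  set (h := Rmin (del / 2) (b - c)).
  assert (Hh : 0 < h < del).
  { pose proof (cond_pos del). pose proof (Rmin_l (del / 2) (b - c)).
    unfold h; split; [apply Rmin_glb_lt|]; lra. }
  assert (Hslope : Rabs ((g (c + h) - g c) / h - l) < - l / 2)
    by (apply Hdel; [lra|rewrite Rabs_pos_eq; lra]).
  apply Rabs_def2 in Hslope.
  assert (Hinc : 0 <= (g (c + h) - g c) / h).
  { apply Rdiv_le_0_compat; [|lra].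
    pose proof (Rmin_r (del / 2) (b - c)). assert (g c <= g (c + h)); [|lra].
    apply Hmin. unfold h in *. lra. }
  lra.
Qed.

(* [y e^{-k t}] is nonincreasing. *)
Lemma gronwall_nonpos (y dy : R -> R) (k s t : R) :
  s <= t -> (forall x, s <= x <= t -> is_derive y x (dy x)) ->
  (forall x, s <= x <= t -> dy x <= k * y x) -> y s <= 0 -> y t <= 0.
Proof.
  intros Hst Hy Hdy Hys.
  set (w := fun x => y x * exp (- (k * x))).
  set (dw := fun x => (dy x - k * y x) * exp (- (k * x))).
  assert (Hw : forall x, s <= x <= t -> is_derive w x (dw x)).
  { intros x Hx. apply is_derive_Reals.
    unfold w, dw.
    replace ((dy x - k * y x) * exp (- (k * x))) with
      (dy x * exp (- (k * x)) + y x * (exp (- (k * x)) * - (k * 1))) by ring.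
    apply (derivable_pt_lim_mult y (fun x => exp (- (k * x)))).
    - apply is_derive_Reals, Hy, Hx.
    - apply (derivable_pt_lim_comp (fun x => - (k * x)) exp).
      + apply derivable_pt_lim_opp, derivable_pt_lim_scal, derivable_pt_lim_id.
      + apply derivable_pt_lim_exp. }
  destruct (MVT_gen w s t dw) as [c [Hc Hmvt]];
    rewrite Rmin_left in * by lra; rewrite Rmax_right in * by lra.
  - intros x Hx. apply Hw. lra.
  - intros x Hx. apply (continuity_pt_of_is_derive _ _ _ (Hw x Hx)).
  - assert (Hdwc : dw c <= 0).
    { unfold dw. pose proof (exp_pos (- (k * c))).
      pose proof (Hdy c Hc). nra. }
    unfold w in Hmvt. pose proof (exp_pos (- (k * s))). pose proof (exp_pos (- (k * t))).
    nra.
Qed.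

Definition etabar (d : R) : R := d + 1 + 10 * d / (d - 2).

(* The slope of [barrier] (below) at a zero of [barrier]; [etabar d] is chosen so
   that [x >= d + 1] and [x (d - 2) >= 10 d], which makes it negative. *)
Lemma f_barrier_slope_neg (d x p : R) :
  2 < d -> etabar d <= x -> p < 1 ->
  - Defs.f d x p (- 3 * (1 - p)) - 3 * (- 3 * (1 - p)) < 0.
Proof.
  intros Hd Hx Hp. unfold etabar in Hx.
  assert (Hq : 0 < 10 * d / (d - 2)) by (apply Rdiv_lt_0_compat; lra).
  assert (Hx_d : 10 * d <= x * (d - 2)).
  { assert (Hle : 10 * d / (d - 2) * (d - 2) <= x * (d - 2))
      by (apply Rmult_le_compat_r; lra).
    replace (10 * d / (d - 2) * (d - 2)) with (10 * d) in Hle by (field; lra).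
    exact Hle. }
  set (h := 1 - p).
  replace (- Defs.f d x p (- 3 * h) - 3 * (- 3 * h)) with
    (h / (2 * d * x) * (6 * d * (d + 1) - 3 * x * x * (d - 2) - 6 * x * x * h
                        + 20 * d * x - 2 * d * x * h))
    by (unfold Defs.f, h; field; lra).
  assert (Hh : 0 < h) by (unfold h; lra).
  assert (Hcoef : 0 < h / (2 * d * x)) by (apply Rdiv_lt_0_compat; nra).
  assert (Hbr : 6 * d * (d + 1) - 3 * x * x * (d - 2) - 6 * x * x * h
                + 20 * d * x - 2 * d * x * h < 0).
  { assert (6 * d * (d + 1) <= 6 * d * x) by nra.
    assert (30 * d * x <= 3 * x * x * (d - 2)) by nra.
    nra. }
  nra.
Qed.

Section Barrier.

Variables (d a b : R) (phi dphi : R -> R).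
Hypothesis Hsol : solves_on d a b phi dphi.

(* The factor [3] makes [barrier] positive wherever [phi <= 1/2] and [phi' >= -1]. *)
Definition barrier (t : R) : R := dphi t + 3 * (1 - phi t).

Lemma is_derive_one_minus_phi (t : R) :
  a < t < b -> is_derive (fun s => 1 - phi s) t (- dphi t).
Proof.
  intros Ht. apply is_derive_Reals.
  replace (- dphi t) with (0 - dphi t) by ring.
  apply (derivable_pt_lim_minus (fun _ => 1) phi).
  - apply derivable_pt_lim_const.
  - apply is_derive_Reals, (Hsol t Ht).
Qed.

Lemma is_derive_barrier (t : R) :
  a < t < b ->
  is_derive barrier t (- Defs.f d t (phi t) (dphi t) - 3 * dphi t).
Proof.
  intros Ht. apply is_derive_Reals. unfold barrier.
  replace (- Defs.f d t (phi t) (dphi t) - 3 * dphi t) with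
    (- Defs.f d t (phi t) (dphi t) + 3 * - dphi t) by ring.
  apply (derivable_pt_lim_plus dphi (fun s => 3 * (1 - phi s))).
  - apply is_derive_Reals, (Hsol t Ht).
  - apply (derivable_pt_lim_scal (fun s => 1 - phi s)).
    apply is_derive_Reals, is_derive_one_minus_phi, Ht.
Qed.

Lemma phi_ge1_while_barrier_nonneg (t0 s : R) :
  a < t0 -> t0 <= s -> s < b -> 1 <= phi t0 ->
  (forall t, t0 <= t <= s -> 0 <= barrier t) -> 1 <= phi s.
Proof.
  intros Hat0 Ht0s Hsb Hphi0 Hbar.
  assert (1 - phi s <= 0); [|lra].
  apply (gronwall_nonpos (fun t => 1 - phi t) (fun t => - dphi t) 3 t0 s).
  - exact Ht0s.
  - intros t Ht. apply is_derive_one_minus_phi. lra.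
  - intros t Ht. pose proof (Hbar t Ht). unfold barrier in *. lra.
  - lra.
Qed.

Hypothesis Hd : 2 < d.

Lemma barrier_no_upcrossing (t0 s : R) :
  etabar d <= t0 -> a < t0 -> t0 < s -> s < b ->
  barrier t0 = 0 -> phi t0 < 1 -> ~ (forall t, t0 < t <= s -> 0 < barrier t).
Proof.
  intros Ht0 Hat0 Ht0s Hsb Hzero Hphi0 Hpos.
  assert (Hslope := is_derive_barrier t0 ltac:(lra)).
  assert (Hdphi0 : dphi t0 = - 3 * (1 - phi t0)) by (unfold barrier in Hzero; lra).
  rewrite Hdphi0 in Hslope.
  assert (Hneg := f_barrier_slope_neg d t0 (phi t0) Hd Ht0 Hphi0).
  assert (0 <= - Defs.f d t0 (phi t0) (- 3 * (1 - phi t0))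
               - 3 * (- 3 * (1 - phi t0))); [|lra].
  apply (is_derive_ge0_at_left_min _ t0 s _ Ht0s Hslope).
  intros t Ht. rewrite Hzero. left. apply Hpos, Ht.
Qed.

End Barrier.

Theorem lemmaA2 (d : R) (hd : 2 < d) :
  exists etabar : R, 0 < etabar /\
    forall (eta1 eta2 a b : R) (phi dphi : R -> R),
      etabar <= eta1 ->
      0 < a -> a < eta1 -> eta1 < eta2 -> eta2 < b ->
      solves_on d a b phi dphi ->
      phi eta1 = 1 -> dphi eta1 <= 0 ->
      0 <= phi eta2 <= 1 / 2 ->
      dphi eta2 < -1.
Proof.
  exists (etabar d). split.
  { assert (0 < 10 * d / (d - 2)) by (apply Rdiv_lt_0_compat; lra).
    unfold etabar. lra. }
  intros eta1 eta2 a b phi dphi Hbar Ha Hae1 He12 He2b Hsol Hphi1 Hdphi1 Hphi2.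
  destruct (Rlt_or_le (dphi eta2) (-1)) as [Hok|Hslow]; [exact Hok|exfalso].
  destruct (last_zero (barrier phi dphi) eta1 eta2) as [t0 [Ht0 [Hzero Hpos]]].
  - lra.
  - intros t Ht. eapply continuity_pt_of_is_derive, is_derive_barrier; [exact Hsol|lra].
  - unfold barrier. lra.
  - unfold barrier. lra.
  - destruct (Rlt_or_le (phi t0) 1) as [Hlt|Hge].
    + apply (barrier_no_upcrossing d a b phi dphi Hsol hd t0 eta2); auto; lra.
    + assert (1 <= phi eta2); [|lra].
      apply (phi_ge1_while_barrier_nonneg d a b phi dphi Hsol t0 eta2); try lra.
      intros t [[Hlt|<-] Ht]; [left; apply Hpos|]; lra.
Qed.
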